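(* Let $n>1$ be an integer with prime factorization $n=\prod_{i=1}^{\ell}p_i^{a_i}$, where $p_1<p_2<\cdots<p_\ell$ are primes and each $a_i\ge 1$. Then $F_n=D_n$ if and only if \[ p_i-1=\prod_{j=1}^{i-1}p_j^{a_j}\quad\text{for all }1\le i\le \ell \] (for $i=1$ the empty product is $1$, so the condition says $p_1=2$).
   Context: For a composite integer $n$, let $d(n)$ denote the largest divisor of $n$ with $1<d(n)<n$. Define $f$ on integers $n>1$ by $f(n)=n-1$ if $n$ is prime and $f(n)=n-d(n)$ if $n$ is composite. Let $f^{(0)}(n)=n$ and $f^{(i)}=f\circ f^{(i-1)}$ for $i\ge1$. Since $f(m)<m$ for all $m>1$, iterating $f$ from $n$ eventually reaches $1$; define $F_n=\{n,f(n),f^{(2)}(n),\dots,1\}$ to be the set of all iterates up to and including the first occurrence of $1$. Let $D_n$ denote the set of all positive divisors of $n$. *)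

From mathcomp Require Import all_boot.
Set Implicit Arguments. Unset Strict Implicit. Unset Printing Implicit Defensive.

Definition dmax (n : nat) : nat := \max_(2 <= d < n | d %| n) d.

(* f(n) = n - 1 if n prime, n - d(n) if n composite (n > 1).
   Convention: f 1 = 1 (and f 0 = 0), so that iteration stays at 1 once reached;
   the values at 0,1 are irrelevant for the orbit F_n. *)
Definition f (n : nat) : nat :=
  if n <= 1 then n else if prime n then n.-1 else n - dmax n.

Definition inF (n m : nat) : Prop := exists i : nat, iter i f n = m.

Definition inD (n m : nat) : Prop := 0 < m /\ m %| n.

From mathcomp Require Import all_boot zify.

Set Implicit Arguments.
Unset Strict Implicit.
Unset Printing Implicit Defensive.

(* With p the least prime factor of x, f x = (p - 1) (x / p), so f never creates a prime
   factor larger than those of x, and f commutes with multiplication by powers of q on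
   numbers whose prime factors are all below q.  Write n = M q^a with q the largest prime
   factor of n.  The orbit of n then runs from M q^a down to q^a, and when q - 1 = M it
   continues with f(q^a) = M q^(a-1), and so on.  Conversely F_n = D_n forces q - 1 to
   divide M while M < q.  Hence F_n = D_n iff q = M + 1 and F_M = D_M; the product
   condition satisfies the same recursion, and induction on n concludes. *)

Lemma dmax_pdiv m : 1 < m -> ~~ prime m -> dmax m = m %/ pdiv m.
Proof.
move=> m1 npm.
set p := pdiv m.
have pp : prime p by apply: pdiv_prime.
have p1 : 1 < p by apply: prime_gt1.
have pdm : p %| m by apply: pdiv_dvd.
have plt : p < m.
  rewrite ltn_neqAle pdiv_leq ?andbT; last lia.
  by apply: contra npm => /eqP <-.
have k2 : 1 < m %/ p by rewrite ltn_divRL //; lia.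
apply/eqP; rewrite eqn_leq; apply/andP; split.
- apply/bigmax_leqP_seq => d; rewrite mem_index_iota => /andP [d2 dm] ddm.
  have [e He] : exists e, m = e * d by exists (m %/ d); rewrite divnK.
  have e1 : 1 < e by move: dm; rewrite He; case: e {He} => [|[|e]] //; lia.
  have pe : p <= e by apply: pdiv_min_dvd => //; rewrite He dvdn_mulr.
  by rewrite leq_divRL; [rewrite He mulnC leq_mul2r pe orbT | lia].
- apply: (bigmaxn_sup_seq (m %/ p)) => //; last exact: dvdn_div.
  by rewrite mem_index_iota k2 ltn_Pdiv //; lia.
Qed.

Lemma fE m : 1 < m -> f m = m - m %/ pdiv m.
Proof.
move=> m1; rewrite /f leqNgt m1 /=.
case: ifP => pm; last by rewrite dmax_pdiv // pm.
by rewrite pdiv_id // divnn prime_gt0 // subn1.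
Qed.

Lemma f_pdivE m : 1 < m -> f m = (pdiv m).-1 * (m %/ pdiv m).
Proof.
move=> m1; rewrite fE // -subn1 mulnBl mul1n [pdiv m * _]mulnC divnK //.
exact: pdiv_dvd.
Qed.

Lemma f_le m : f m <= m.
Proof. by case: (ltnP 1 m) => m1; [rewrite fE // leq_subr | rewrite /f m1]. Qed.

Lemma f_gt0 m : 0 < m -> 0 < f m.
Proof.
move=> m0; case: (ltnP 1 m) => m1; last by rewrite /f m1.
by rewrite fE // subn_gt0 ltn_Pdiv // prime_gt1 // pdiv_prime.
Qed.

Lemma f_pfactor q k : prime q -> f (q ^ k.+1) = q.-1 * q ^ k.
Proof.
move=> pq; have q1 := prime_gt1 pq.
rewrite f_pdivE; last by rewrite -{1}(expn0 q) ltn_exp2l.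
by rewrite pdiv_pfactor // expnS mulKn //; lia.
Qed.

Lemma iter_f1 k : iter k f 1 = 1.
Proof. by elim: k => //= k ->. Qed.

Lemma inF_refl n : inF n n.
Proof. by exists 0. Qed.

Lemma inF_f n x : inF n x -> inF n (f x).
Proof. by case=> i <-; exists i.+1. Qed.

Lemma inF_trans n x y : inF n x -> inF x y -> inF n y.
Proof. by case=> i <- [j <-]; exists (j + i); rewrite iterD. Qed.

Lemma inF_le n x : inF n x -> x <= n.
Proof. by case=> i <-; elim: i => //= i; apply: leq_trans (f_le _). Qed.

(* Orbits are decreasing chains, so of two points of an orbit the larger one reaches the
   smaller one. *)
Lemma inF_chain n x y : inF n x -> inF n y -> y <= x -> inF x y.
Proof.
case=> i <- [j <-] yx.
case: (leqP i j) => ij; first by exists (j - i); rewrite -iterD subnK.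
suff -> : iter j f n = iter i f n by apply: inF_refl.
apply/eqP; rewrite eqn_leq yx -(subnK (ltnW ij)) iterD.
by apply: inF_le; exists (i - j).
Qed.

Definition primes_lt q x := forall r, prime r -> r %| x -> r < q.

Lemma primes_lt_f q x : primes_lt q x -> primes_lt q (f x).
Proof.
move=> ltx; case: (ltnP 1 x) => x1; last by rewrite /f x1.
have pp := pdiv_prime x1; have p1 := prime_gt1 pp.
rewrite f_pdivE // => r pr; rewrite Euclid_dvdM // => /orP [r_p | r_xp].
- have r_le : r <= (pdiv x).-1 by apply: dvdn_leq => //; lia.
  have := ltx _ pp (pdiv_dvd x); lia.
- by apply: ltx => //; apply: dvdn_trans r_xp (dvdn_div (pdiv_dvd x)).
Qed.

Lemma primes_lt_inF q x y : primes_lt q x -> inF x y -> primes_lt q y.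
Proof. by move=> ltx [i <-]; elim: i => //= i; apply: primes_lt_f. Qed.

Lemma primes_lt_coprime q x : prime q -> primes_lt q x -> coprime q x.
Proof.
move=> pq ltx; rewrite prime_coprime //; apply/negP => qx.
by have := ltx q pq qx; rewrite ltnn.
Qed.

Lemma pdiv_mul_pfactor q x k :
  prime q -> 1 < x -> primes_lt q x -> pdiv (x * q ^ k) = pdiv x.
Proof.
move=> pq x1 ltx.
have xq1 : 1 < x * q ^ k by rewrite (leq_trans x1) // leq_pmulr // expn_gt0 prime_gt0.
have pr := pdiv_prime xq1.
apply/eqP; rewrite eqn_leq; apply/andP; split.
  apply: pdiv_min_dvd; first exact: prime_gt1 (pdiv_prime x1).
  by apply: dvdn_mulr; apply: pdiv_dvd.
have := pdiv_dvd (x * q ^ k); rewrite Euclid_dvdM // => /orP [p_x | p_qk].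
  exact: pdiv_min_dvd (prime_gt1 pr) p_x.
have -> : pdiv (x * q ^ k) = q.
  by apply/eqP; rewrite -(dvdn_prime2 pr pq); move: p_qk; rewrite Euclid_dvdX // => /andP [].
by apply: ltnW; apply: ltx; [apply: pdiv_prime | apply: pdiv_dvd].
Qed.

Lemma f_mul_pfactor q x k :
  prime q -> 1 < x -> primes_lt q x -> f (x * q ^ k) = f x * q ^ k.
Proof.
move=> pq x1 ltx.
have xq1 : 1 < x * q ^ k by rewrite (leq_trans x1) // leq_pmulr // expn_gt0 prime_gt0.
by rewrite fE // fE // pdiv_mul_pfactor // mulnBl divn_mulAC //; apply: pdiv_dvd.
Qed.

Lemma inF_mul_pfactor q x y k :
  prime q -> primes_lt q x -> inF x y -> inF (x * q ^ k) (y * q ^ k).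
Proof.
move=> pq ltx [i <-]; elim: i => [|i IH]; first exact: inF_refl.
rewrite /=; set z := iter i f x in IH *.
have ltz : primes_lt q z by apply: primes_lt_inF ltx _; exists i.
case: (ltnP 1 z) => z1; last by rewrite /f z1.
by rewrite -f_mul_pfactor //; apply: inF_f.
Qed.

Lemma dvdn_mul_pfactor q M a x : prime q -> 0 < M -> coprime q M -> 0 < x ->
  x %| M * q ^ a -> exists d k, [/\ x = d * q ^ k, d %| M & k <= a].
Proof.
move=> pq M0 cqM x0 xd.
have [d cqd E] := pfactor_coprime pq x0.
exists d, (logn q x); split => //.
  have : d %| M * q ^ a by apply: dvdn_trans xd; rewrite E dvdn_mulr.
  by rewrite Gauss_dvdl // coprimeXr // coprime_sym.
have qa0 : 0 < q ^ a by rewrite expn_gt0 prime_gt0.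
have Mq : 0 < M * q ^ a by rewrite muln_gt0 M0.
have := dvdn_leq_log q Mq xd.
by rewrite lognM // (logn_coprime cqM) pfactorK.
Qed.

Definition orbit_eq_divisors n := forall m, inF n m <-> inD n m.

Section LargestPrimeFactor.

Variables (q M a : nat).
Hypotheses (q_prime : prime q) (M_gt0 : 0 < M) (M_primes_lt : primes_lt q M).

Let q_gt1 : 1 < q := prime_gt1 q_prime.
Let q_M_coprime : coprime q M := primes_lt_coprime q_prime M_primes_lt.

Lemma dvdn_mul_pfactor_coprime x :
  primes_lt q x -> (x %| M * q ^ a) = (x %| M).
Proof.
by move=> ltx; rewrite Gauss_dvdl // coprimeXr // coprime_sym primes_lt_coprime.
Qed.

Lemma orbit_eq_divisors_pred (a_gt0 : 0 < a) :
  orbit_eq_divisors (M * q ^ a) -> q = M.+1.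
Proof.
move=> FD.
have q_orb : inF (M * q ^ a) q by apply/FD; split; [lia | rewrite dvdn_mull ?dvdn_exp].
have q1_dvd : q.-1 %| M.
  have [_] := (FD _).1 (inF_f q_orb).
  rewrite f_pdivE // pdiv_id // divnn prime_gt0 // muln1.
  by rewrite Gauss_dvdl // coprimeXr // coprimePn; lia.
have M_orb : inF (M * q ^ a) M by apply/FD; split; rewrite ?dvdn_mulr.
have M_lt_q : M < q.
  rewrite ltnNge; apply/negP => qM.
  have := primes_lt_inF M_primes_lt (inF_chain M_orb q_orb qM) q_prime (dvdnn q).
  by rewrite ltnn.
have := dvdn_leq M_gt0 q1_dvd; lia.
Qed.

Lemma orbit_eq_divisors_cofactor :
  orbit_eq_divisors (M * q ^ a) -> orbit_eq_divisors M.
Proof.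
move=> FD.
have M_orb : inF (M * q ^ a) M by apply/FD; split; rewrite ?dvdn_mulr.
move=> m; split.
- move=> m_orb; have ltm := primes_lt_inF M_primes_lt m_orb.
  have [m0] := (FD m).1 (inF_trans M_orb m_orb).
  by rewrite dvdn_mul_pfactor_coprime.
- move=> [m0 mM]; have m_orb : inF (M * q ^ a) m by apply/FD; split; rewrite ?dvdn_mulr.
  exact: inF_chain M_orb m_orb (dvdn_leq M_gt0 mM).
Qed.

Hypothesis q_succ : q = M.+1.

(* Passing through q^(k+1), the orbit of M q^(k+1) reaches f(q^(k+1)) = (q-1) q^k. *)
Lemma inF_mul_pfactor_pred (M_to_1 : inF M 1) k : inF (M * q ^ k.+1) (M * q ^ k).
Proof.
have := inF_f (inF_mul_pfactor k.+1 q_prime M_primes_lt M_to_1).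
by rewrite mul1n f_pfactor // q_succ.
Qed.

Lemma inF_mul_pfactor_le (M_to_1 : inF M 1) j k : k <= j -> inF (M * q ^ j) (M * q ^ k).
Proof.
elim: j => [|j IH]; first by rewrite leqn0 => /eqP ->; apply: inF_refl.
rewrite leq_eqVlt => /orP [/eqP -> | kj]; first exact: inF_refl.
exact: inF_trans (inF_mul_pfactor_pred M_to_1 j) (IH kj).
Qed.

Hypothesis FD_M : orbit_eq_divisors M.

Lemma f_dvdn_mul_pfactor x : 0 < x -> x %| M * q ^ a -> f x %| M * q ^ a.
Proof.
move=> x0 xd.
have [d [k [Ex dM ka]]] := dvdn_mul_pfactor q_prime M_gt0 q_M_coprime x0 xd; subst x.
have d0 : 0 < d by move: x0; rewrite muln_gt0 => /andP [].
clear x0 xd; case: (ltnP 1 d) => d1.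
  have ltd : primes_lt q d.
    by move=> r pr rd; apply: M_primes_lt => //; apply: dvdn_trans rd dM.
  have [_ fdM] := (FD_M _).1 (inF_f ((FD_M d).2 (conj d0 dM))).
  by rewrite f_mul_pfactor // dvdn_mul // dvdn_exp2l.
have -> : d = 1 by lia.
case: k ka => [|k] ka; first by rewrite /f.
by rewrite mul1n f_pfactor // q_succ /= dvdn_mul // dvdn_exp2l // ltnW.
Qed.

Lemma orbit_eq_divisors_mul_pfactor : orbit_eq_divisors (M * q ^ a).
Proof.
have n0 : 0 < M * q ^ a by rewrite muln_gt0 M_gt0 expn_gt0 prime_gt0.
move=> m; split.
- case=> i <-; elim: i => [|i [x0 xd]]; first by split.
  by split; [apply: f_gt0 | apply: f_dvdn_mul_pfactor].
- move=> [m0 mn].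
  have [d [k [Em dM ka]]] := dvdn_mul_pfactor q_prime M_gt0 q_M_coprime m0 mn; subst m.
  have d0 : 0 < d by move: m0; rewrite muln_gt0 => /andP [].
  have M_to_1 : inF M 1 by apply/FD_M.
  apply: inF_trans (inF_mul_pfactor_le M_to_1 ka) _.
  by apply: inF_mul_pfactor => //; apply/FD_M.
Qed.

End LargestPrimeFactor.

Lemma orbit_eq_divisors_mul_pfactorE q M a :
  prime q -> 0 < M -> primes_lt q M -> 0 < a ->
  orbit_eq_divisors (M * q ^ a) <-> q = M.+1 /\ orbit_eq_divisors M.
Proof.
move=> pq M0 ltM a0; split.
- move=> FD; split; first exact: orbit_eq_divisors_pred FD.
  exact: orbit_eq_divisors_cofactor FD.
- by case=> qM FD_M; apply: orbit_eq_divisors_mul_pfactor.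
Qed.

Definition pfactor_chain n := forall i, i < size (primes n) ->
  (nth 0 (primes n) i).-1 =
  \prod_(j < i) (nth 0 (primes n) j) ^ logn (nth 0 (primes n) j) n.

Lemma prod_primes_logn M : 0 < M ->
  \prod_(j < size (primes M)) (nth 0 (primes M) j) ^ logn (nth 0 (primes M) j) M = M.
Proof.
move=> M0; rewrite [RHS](prod_prime_decomp M0) prime_decompE big_map (big_nth 0) big_mkord.
by apply: eq_bigr.
Qed.

Lemma sorted_rcons_ltn s q :
  sorted ltn s -> (forall x, x \in s -> x < q) -> sorted ltn (rcons s q).
Proof.
by case: s => [|x s] //= s_lt lt_q; rewrite rcons_path s_lt; apply: lt_q; apply: mem_last.
Qed.

Lemma primes_mul_pfactor q M a : prime q -> 0 < M -> primes_lt q M -> 0 < a ->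
  primes (M * q ^ a) = rcons (primes M) q.
Proof.
move=> pq M0 ltM a0.
apply: (irr_sorted_eq ltn_trans ltnn); first exact: sorted_primes.
  apply: sorted_rcons_ltn; first exact: sorted_primes.
  by move=> x; rewrite mem_primes => /and3P [px _ xd]; apply: ltM.
move=> p; rewrite primesM // ?expn_gt0 ?prime_gt0 // primesX // (primes_prime pq).
by rewrite mem_rcons in_cons inE orbC.
Qed.

Lemma pfactor_chain_mul_pfactorE q M a : prime q -> 0 < M -> primes_lt q M -> 0 < a ->
  pfactor_chain (M * q ^ a) <-> q.-1 = M /\ pfactor_chain M.
Proof.
move=> pq M0 ltM a0.
rewrite /pfactor_chain primes_mul_pfactor // size_rcons.
set s := primes M.
have logn_s i : i < size s -> logn (nth 0 s i) (M * q ^ a) = logn (nth 0 s i) M.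
  move=> lt; have : nth 0 s i \in primes M by apply: mem_nth.
  rewrite mem_primes => /and3P [pp _ pd]; have := ltM _ pp pd => ltq.
  rewrite (lognM _ M0) ?expn_gt0 ?prime_gt0 // lognX (logn_prime _ pq).
  have -> : (nth 0 s i == q) = false by apply/eqP; lia.
  by rewrite muln0 addn0.
have prod_s i : i <= size s ->
    \prod_(j < i) nth 0 (rcons s q) j ^ logn (nth 0 (rcons s q) j) (M * q ^ a) =
    \prod_(j < i) nth 0 s j ^ logn (nth 0 s j) M.
  move=> le; apply: eq_bigr => j _.
  have js : j < size s by apply: leq_trans (ltn_ord j) le.
  by rewrite nth_rcons js logn_s.
split.
- move=> H; split.
    by have := H (size s) (ltnSn _); rewrite nth_rcons ltnn eqxx prod_s // prod_primes_logn.
  by move=> i lt; have := H i (ltnW lt); rewrite nth_rcons lt prod_s // ltnW.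
- move=> [qM HM] i; rewrite ltnS leq_eqVlt => /orP [/eqP -> | lt].
    by rewrite nth_rcons ltnn eqxx prod_s // prod_primes_logn.
  by rewrite nth_rcons lt prod_s ?HM // ltnW.
Qed.

Lemma max_pdiv_decomp n : 1 < n -> exists q M a,
  [/\ prime q, n = M * q ^ a, 0 < M, 0 < a & primes_lt q M].
Proof.
move=> n1; have n0 : 0 < n by lia.
set q := max_pdiv n; have pq : prime q by apply: max_pdiv_prime.
have [M cqM E] := pfactor_coprime pq n0.
exists q, M, (logn q n); split => //.
- by move: n0; rewrite E muln_gt0 => /andP [].
- by rewrite logn_gt0 mem_primes pq n0 max_pdiv_dvd.
- move=> r pr rM; have rn : r %| n by rewrite E dvdn_mulr.
  have : r <= q by apply: max_pdiv_max; rewrite mem_primes pr n0 rn.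
  rewrite leq_eqVlt => /orP [/eqP rq | //].
  by move: cqM; rewrite prime_coprime // -rq rM.
Qed.

Lemma orbit_eq_divisorsE n : 0 < n -> orbit_eq_divisors n <-> pfactor_chain n.
Proof.
elim/ltn_ind: n => n IH n0; case: (ltnP 1 n) => n1; last first.
  have -> : n = 1 by lia.
  split=> [_ i // | _ m]; split; first by case=> i <-; rewrite iter_f1.
  by case=> _; rewrite dvdn1 => /eqP ->; apply: inF_refl.
have [q [M [a [pq En M0 a0 ltM]]]] := max_pdiv_decomp n1; subst n.
have q1 := prime_gt1 pq.
have Mn : M < M * q ^ a by rewrite -{1}(muln1 M) ltn_pmul2l // -(expn0 q) ltn_exp2l.
rewrite orbit_eq_divisors_mul_pfactorE // pfactor_chain_mul_pfactorE // (IH M Mn M0).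
by split=> -[qM HM]; split=> //; lia.
Qed.

Theorem lemma2 (n : nat) (hn : 1 < n) :
  (forall m : nat, inF n m <-> inD n m) <->
  (forall i : nat, i < size (primes n) ->
     (nth 0 (primes n) i).-1 =
     \prod_(j < i) (nth 0 (primes n) j) ^ logn (nth 0 (primes n) j) n).
Proof. by apply: orbit_eq_divisorsE; lia. Qed.
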